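(* Let $G$ be an abelian Hausdorff topological group in which every cyclic subgroup is discrete. The following are equivalent: (i) $G$ contains an infinite absolutely summable set; (ii) $G$ contains a subgroup topologically isomorphic to $P_B$ for some infinite subset $B$ of $G$. Furthermore, if $G$ is complete, these are also equivalent to: (iii) $G$ contains an infinite absolutely Cauchy summable set.
   Context: For $a\in G$, $\langle a\rangle$ is the cyclic subgroup generated by $a$ with the subspace topology, and $P_B=\prod_{b\in B}\langle b\rangle$ carries the Tychonoff product topology. $A\subseteq G$ is absolutely summable if for every family $\{z_a:a\in A\}$ of integers there is $g\in G$ such that for every neighbourhood $U$ of $0$ there is a finite $F\subseteq A$ with $g-\sum_{a\in E}z_aa\in U$ for every finite $E\subseteq A$ containing $F$. $A$ is absolutely Cauchy summable if for every neighbourhood $U$ of $0$ there is a finite $F\subseteq A$ such that the subgroup generated by $A\setminus F$ is contained in $U$. *)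

From HB Require Import structures.
From mathcomp Require Import all_boot all_order all_algebra.
From mathcomp Require Import all_classical all_reals all_analysis.
Set Implicit Arguments. Unset Strict Implicit. Unset Printing Implicit Defensive.
Import Order.TTheory GRing.Theory Num.Theory.
Local Open Scope classical_set_scope.
Local Open Scope ring_scope.

Section Defs.
Variable G : topologicalZmodType.

Definition cyclic_sub (a : G) : set G := [set a *~ n | n in [set: int]].

Definition discrete_subset (S : set G) : Prop :=
  forall x, S x -> exists U : set G, open U /\ U `&` S = [set x].

Definition cyclic_subgroups_discrete : Prop :=
  forall a : G, discrete_subset (cyclic_sub a).

Definition abs_summable (A : set G) : Prop :=
  forall z : G -> int, exists g : G,
    forall U : set G, nbhs (0 : G) U ->
      exists F : set G, [/\ finite_set F, F `<=` A &
        forall E : set G, finite_set E -> F `<=` E -> E `<=` A ->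
          U (g - \sum_(a \in E) a *~ z a)].

Definition is_subgroup (H : set G) : Prop :=
  H 0 /\ (forall x y, H x -> H y -> H (x - y)).

Definition gen_subgroup (S : set G) : set G :=
  [set x | forall H : set G, is_subgroup H -> S `<=` H -> H x].

Definition abs_cauchy_summable (A : set G) : Prop :=
  forall U : set G, nbhs (0 : G) U ->
    exists F : set G, [/\ finite_set F, F `<=` A & gen_subgroup (A `\` F) `<=` U].

(* Cauchy filters for the (unique, G abelian) group uniformity *)
Definition group_cauchy (F : set_system G) : Prop :=
  forall U : set G, nbhs (0 : G) U ->
    exists A : set G, F A /\ (forall x y, A x -> A y -> U (x - y)).

Definition group_complete : Prop :=
  forall F : set_system G, ProperFilter F -> group_cauchy F -> exists l : G, F --> l.

(* P_B, realised as the set of maps f : G -> G with f b in <b> for b in B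
   and f x = 0 off B; it carries the subspace topology of the product
   (Tychonoff = pointwise) topology {ptws G -> G}. *)
Definition PB (B : set G) : set {ptws G -> G} :=
  [set f | (forall b, B b -> cyclic_sub b (f b)) /\ (forall x, ~ B x -> f x = 0)].

(* G contains a subgroup topologically isomorphic to P_B: phi is an
   injective group homomorphism on P_B which is a homeomorphism of P_B onto
   its image phi @` P_B (a subgroup of G, with the subspace topology). *)
Definition top_iso_onto_subgroup (B : set G) (phi : {ptws G -> G} -> G) : Prop :=
  [/\ (forall f g, PB B f -> PB B g -> phi (f \+ g) = phi f + phi g),
      (forall f g, PB B f -> PB B g -> phi f = phi g -> f = g),
      {within PB B, continuous phi} &
      exists psi : G -> {ptws G -> G},
        (forall f, PB B f -> psi (phi f) = f) /\
        {within phi @` PB B, continuous psi}].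
End Defs.

(* If the subgroups generated by the tails A \ F of an absolutely summable set A
   did not shrink to 0, one could pick pairwise disjoint finite blocks of A each
   carrying an integer combination outside a fixed neighbourhood of 0; gluing the
   coefficients of all blocks gives a family with no sum.  Conversely, in a
   complete group the finite partial sums over an absolutely Cauchy summable set
   form a Cauchy filter.

   If phi embeds P_B, the images of the points b e_b (b in B, b <> 0) are
   absolutely summable: the finite truncations of an element of P_B converge to it
   in the product topology, and phi is additive and continuous.

   Conversely, choose recursively b_k in A outside all earlier b_j and F_j, a
   neighbourhood V_k of 0 such that V_k - (V_k + V_k) meets <b_k> only in 0 (this
   uses that <b_k> is discrete), and a finite F_k in A such that A \ F_k generates
   a subgroup inside V_k.  For B = {b_k}, summation f |-> sum_b f b is an additive
   map on P_B.  If f vanishes at b_0, ..., b_(k-1), its b_k-coordinate is its total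
   sum minus two tail sums lying in V_k; hence if the total sum lies in V_0, ...,
   V_k, then f vanishes at b_0, ..., b_k.  This gives injectivity and continuity of
   the inverse.
   Continuity of the summation holds because, by discreteness of the <b>, nearby
   points of P_B agree with f on any given finite set. *)

From HB Require Import structures.
From mathcomp Require Import all_boot all_order all_algebra.
From mathcomp Require Import all_classical all_reals all_analysis.
Import Order.TTheory GRing.Theory Num.Theory.
Local Open Scope classical_set_scope.
Local Open Scope ring_scope.
Set Implicit Arguments. Unset Strict Implicit.

Section Accumulation.
Variables (T : Type) (h : set T -> set T).

Fixpoint accum (k : nat) : set T :=
  if k is k'.+1 then accum k' `|` h (accum k') else set0.

Lemma accum_mono j k : (j <= k)%N -> accum j `<=` accum k.
Proof.
move=> jk; rewrite -(subnK jk); elim: (k - j)%N => [|i IH] //.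
by rewrite addSn => x /IH; left.
Qed.

Lemma accum_step j k : (j < k)%N -> h (accum j) `<=` accum k.
Proof. by move=> jk x hx; apply: (accum_mono jk); right. Qed.

Lemma accum_finite_sub (A : set T) :
  (forall F, finite_set F -> F `<=` A -> finite_set (h F) /\ h F `<=` A) ->
  forall k, finite_set (accum k) /\ accum k `<=` A.
Proof.
move=> hA; elim=> [|k [fk kA]] /=; first by split.
have [fh hkA] := hA _ fk kA.
by split; [rewrite finite_setU | move=> x [/kA|/hkA]].
Qed.

Lemma accum_step_disjoint j k x :
  (forall k x, h (accum k) x -> ~ accum k x) ->
  h (accum j) x -> h (accum k) x -> j = k.
Proof.
move=> fresh hj hk; case: (ltngtP j k) => // [jk|kj].
  by case: (fresh _ _ hk); apply: accum_step jk _ hj.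
by case: (fresh _ _ hj); apply: accum_step kj _ hk.
Qed.

End Accumulation.

Lemma finite_meets_finitely (T : Type) (F : set T) (E : nat -> set T) :
  finite_set F -> (forall j k x, E j x -> E k x -> j = k) ->
  exists k, forall x, E k x -> ~ F x.
Proof.
move=> fF disj; apply: contrapT => /forallNP meets.
have /choice [f fP] : forall k, exists x, E k x /\ F x.
  move=> k; have /existsNP [x /not_implyP [Ekx /contrapT Fx]] := meets k.
  by exists x.
have f_inj : injective f.
  by move=> j k fjk; apply: (disj j k (f j)); [case: (fP j) | rewrite fjk; case: (fP k)].
apply: infinite_nat; rewrite -(eq_finite_set (@inj_card_eq _ _ [set: nat] f _)).
  by apply: sub_finite_set fF => _ [k _ <-]; case: (fP k).
by move=> j k _ _ /f_inj.
Qed.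

Lemma glue_on_disjoint (T R : Type) (r0 : R) (E : nat -> set T) (n : nat -> T -> R) :
  (forall j k x, E j x -> E k x -> j = k) ->
  exists z : T -> R, forall k x, E k x -> z x = n k x.
Proof.
move=> disj; have /choice [z zP] : forall x, exists r, forall k, E k x -> r = n k x.
  move=> x; have [[k Ekx]|nE] := pselect (exists k, E k x).
    by exists (n k x) => j Ejx; rewrite (disj _ _ _ Ejx Ekx).
  by exists r0 => k Ekx; case: nE; exists k.
by exists z => k x /zP.
Qed.

Lemma finite_nat_ub (S : set nat) : finite_set S -> exists M, forall k, S k -> (k <= M)%N.
Proof.
move=> fS; exists (\max_(k <- finmap.enum_fset (fset_set S)) k)%N => k Sk.
apply: (@leq_bigmax_seq _ _ xpredT id) => //.
by move: (in_fset_set fS k) => /= ->; exact: mem_set.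
Qed.

Section TopologicalGroup.
Variable G : topologicalZmodType.

Lemma addl_continuous (x : G) : continuous (fun d : G => x + d).
Proof.
move=> d; apply: (@continuous_comp _ _ _ (pair x) (fun p : G * G => p.1 + p.2)).
  by apply: cvg_pair; [exact: cvg_cst | exact: cvg_id].
exact: add_continuous.
Qed.

Lemma subl_continuous (x : G) : continuous (fun d : G => x - d).
Proof.
move=> d; apply: (@continuous_comp _ _ _ (pair x) (fun p : G * G => p.1 - p.2)).
  by apply: cvg_pair; [exact: cvg_cst | exact: cvg_id].
exact: sub_continuous.
Qed.

Lemma subr_continuous (x : G) : continuous (fun d : G => d - x).
Proof.
move=> d; apply: (@continuous_comp _ _ _ (pair^~ x) (fun p : G * G => p.1 - p.2)).
  by apply: cvg_pair; [exact: cvg_id | exact: cvg_cst].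
exact: sub_continuous.
Qed.

Lemma nbhs0_addl (x : G) (U : set G) : nbhs x U -> nbhs 0 (fun d => U (x + d)).
Proof. by move=> Ux; apply: (@addl_continuous x 0); rewrite /= addr0. Qed.

Lemma nbhs0_subl (x : G) (U : set G) : nbhs x U -> nbhs 0 (fun d => U (x - d)).
Proof. by move=> Ux; apply: (@subl_continuous x 0); rewrite /= subr0. Qed.

Lemma nbhs_subl (x : G) (U : set G) : nbhs 0 U -> nbhs x (fun y => U (x - y)).
Proof. by move=> U0; apply: (@subl_continuous x x); rewrite /= subrr. Qed.

Lemma nbhs_subr (x : G) (U : set G) : nbhs 0 U -> nbhs x (fun y => U (y - x)).
Proof. by move=> U0; apply: (@subr_continuous x x); rewrite /= subrr. Qed.

Lemma nbhs0_binop_split (op : G -> G -> G) (U : set G) :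
  continuous (fun p : G * G => op p.1 p.2) -> op 0 0 = 0 -> nbhs 0 U ->
  exists V : set G, nbhs 0 V /\ forall x y, V x -> V y -> U (op x y).
Proof.
move=> op_cont op00 U0.
have : nbhs (0, 0) ((fun p : G * G => op p.1 p.2) @^-1` U).
  by apply: (op_cont (0, 0)); rewrite /= op00.
move=> [[V W] /= [V0 W0] VW]; exists (V `&` W); split; first exact: filterI.
by move=> x y [Vx _] [_ Wy]; apply: (VW (x, y)).
Qed.

Lemma nbhs0_add_split (U : set G) : nbhs 0 U ->
  exists V : set G, nbhs 0 V /\ forall x y, V x -> V y -> U (x + y).
Proof. exact/nbhs0_binop_split/addr0/add_continuous. Qed.

Lemma nbhs0_sub_split (U : set G) : nbhs 0 U ->
  exists V : set G, nbhs 0 V /\ forall x y, V x -> V y -> U (x - y).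
Proof. exact/nbhs0_binop_split/subr0/sub_continuous. Qed.

End TopologicalGroup.

Section Subgroups.
Variable G : topologicalZmodType.

Section Closure.
Variable H : set G.
Hypothesis sH : is_subgroup H.

Lemma subgroup0 : H 0. Proof. by case: sH. Qed.

Lemma subgroupB x y : H x -> H y -> H (x - y). Proof. by case: sH => _; apply. Qed.

Lemma subgroupN x : H x -> H (- x).
Proof. by move=> Hx; rewrite -sub0r; apply: subgroupB => //; exact: subgroup0. Qed.

Lemma subgroupD x y : H x -> H y -> H (x + y).
Proof. by move=> Hx Hy; rewrite -(opprK y); apply: subgroupB => //; exact: subgroupN. Qed.

Lemma subgroupMz x (n : int) : H x -> H (x *~ n).
Proof.
move=> Hx; have Mn k : H (x *+ k).
  by elim: k => [|k IH]; [rewrite mulr0n; exact: subgroup0 | rewrite mulrS; exact: subgroupD].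
by case: n => k; [exact: Mn | rewrite NegzE mulrNz; exact/subgroupN/Mn].
Qed.

Lemma subgroup_fsum (E : set G) (w : G -> G) : finite_set E ->
  (forall a, E a -> H (w a)) -> H (\sum_(a \in E) w a).
Proof.
move=> fE Hw; rewrite fsbig_finite // big_seq; apply: big_ind => //.
- exact: subgroup0.
- exact: subgroupD.
by move=> i; rewrite in_fset_set // inE => /Hw.
Qed.

End Closure.

Lemma cyclic_sub_subgroup (b : G) : is_subgroup (cyclic_sub b).
Proof.
split; first by exists 0 => //; rewrite mulr0z.
by move=> _ _ [n _ <-] [m _ <-]; exists (n - m) => //; rewrite mulrzBr.
Qed.

Lemma gen_subgroup_subgroup (S : set G) : is_subgroup (gen_subgroup S).
Proof.
split; first by move=> H [].
by move=> x y Sx Sy H sH SH; apply: subgroupB => //; [apply: Sx | apply: Sy].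
Qed.

Lemma cyclic_sub_gen_subgroup (S : set G) b x :
  S b -> cyclic_sub b x -> gen_subgroup S x.
Proof.
move=> Sb [n _ <-]; apply: (subgroupMz (gen_subgroup_subgroup S)).
by move=> H _; apply.
Qed.

Definition int_span (S : set G) (x : G) := exists E (n : G -> int),
  [/\ finite_set E, E `<=` S, (forall a, ~ E a -> n a = 0) &
      x = \sum_(a \in E) a *~ n a].

Lemma int_span_subgroup (S : set G) : is_subgroup (int_span S).
Proof.
have widen (E E' : set G) (n : G -> int) : E `<=` E' -> (forall a, ~ E a -> n a = 0) ->
    \sum_(a \in E) a *~ n a = \sum_(a \in E') a *~ n a.
  by move=> EE' n0; apply: fsbig_widen => // a [_ nEa] /=; rewrite n0 // mulr0z.
split; first by exists set0, (fun _ => 0); split => //; rewrite fsbig_set0.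
move=> _ _ [E1 [n1 [f1 S1 z1 ->]]] [E2 [n2 [f2 S2 z2 ->]]].
exists (E1 `|` E2), (fun a => n1 a - n2 a); split.
- by rewrite finite_setU.
- by move=> a [/S1|/S2].
- by move=> a /not_orP [/z1 -> /z2 ->]; rewrite subr0.
under [in RHS]eq_fsbigr do rewrite mulrzBr.
rewrite !fsbig_finite ?finite_setU // sumrB -!fsbig_finite ?finite_setU //.
by rewrite (widen _ _ _ (@subsetUl _ E1 E2) z1) (widen _ _ _ (@subsetUr _ E1 E2) z2).
Qed.

Lemma gen_subgroup_int_span (S : set G) : gen_subgroup S `<=` int_span S.
Proof.
move=> x Sx; apply: Sx; first exact: int_span_subgroup.
move=> a Sa; exists [set a], (fun b => if b == a then 1 else 0); split.
- exact: finite_set1.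
- by move=> b ->.
- by move=> b nb; rewrite ifF //; apply/negP => /eqP.
by rewrite fsbig_set1 eqxx mulr1z.
Qed.

Lemma fsum_sub_gen_subgroup (A F E : set G) (w : G -> G) :
  (forall a, A a -> cyclic_sub a (w a)) -> finite_set E -> F `<=` E -> E `<=` A ->
  gen_subgroup (A `\` F) (\sum_(a \in E) w a - \sum_(a \in F) w a).
Proof.
move=> Aw fE FE EA; rewrite (fsbigID F) // (setIidr FE) addrAC subrr add0r.
apply: subgroup_fsum; [exact: gen_subgroup_subgroup | exact: finite_setIl |].
move=> a [Ea nFa]; apply: (@cyclic_sub_gen_subgroup _ a); last exact/Aw/EA.
by split => //; apply: EA.
Qed.

End Subgroups.

Section FamilySums.
Variable G : topologicalZmodType.

(* [abs_summable A] unfolds to [forall z, exists g, has_fsum A (fun a => a *~ z a) g]. *)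
Definition has_fsum (A : set G) (w : G -> G) (g : G) :=
  forall U : set G, nbhs 0 U -> exists F : set G, [/\ finite_set F, F `<=` A &
    forall E : set G, finite_set E -> F `<=` E -> E `<=` A -> U (g - \sum_(a \in E) w a)].

Lemma has_fsum_unique (A : set G) w g1 g2 : hausdorff_space G ->
  has_fsum A w g1 -> has_fsum A w g2 -> g1 = g2.
Proof.
move=> hG s1 s2; apply: hG => P Q nP nQ.
have [F1 [f1 F1A H1]] := s1 _ (nbhs0_subl nP).
have [F2 [f2 F2A H2]] := s2 _ (nbhs0_subl nQ).
have fF : finite_set (F1 `|` F2) by rewrite finite_setU.
have FA : F1 `|` F2 `<=` A by move=> x [/F1A|/F2A].
exists (\sum_(a \in F1 `|` F2) w a); split.
  by have := H1 _ fF (@subsetUl _ F1 F2) FA; rewrite opprB addrC subrK.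
by have := H2 _ fF (@subsetUr _ F1 F2) FA; rewrite opprB addrC subrK.
Qed.

Lemma eq_has_fsum (A : set G) w1 w2 g : (forall a, A a -> w1 a = w2 a) ->
  has_fsum A w1 g -> has_fsum A w2 g.
Proof.
move=> e s U U0; have [F [fF FA H]] := s U U0; exists F; split => // E fE FE EA.
rewrite (eq_fsbigr w1); first exact: H.
by move=> x /set_mem /EA /e ->.
Qed.

Lemma has_fsumD (A : set G) w1 w2 g1 g2 :
  has_fsum A w1 g1 -> has_fsum A w2 g2 -> has_fsum A (w1 \+ w2) (g1 + g2).
Proof.
move=> s1 s2 U U0; have [V [V0 VU]] := nbhs0_add_split U0.
have [F1 [f1 F1A H1]] := s1 _ V0; have [F2 [f2 F2A H2]] := s2 _ V0.
exists (F1 `|` F2); split; [by rewrite finite_setU | by move=> x [/F1A|/F2A] |].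
move=> E fE FE EA; rewrite fsbig_split // opprD addrACA.
apply: VU; [apply: H1 | apply: H2] => //; apply: subset_trans FE.
  exact: subsetUl.
exact: subsetUr.
Qed.

Lemma has_fsum_cauchy (A : set G) w g U : has_fsum A w g -> nbhs 0 U ->
  exists F, [/\ finite_set F, F `<=` A &
    forall E, finite_set E -> E `<=` A `\` F -> U (\sum_(a \in E) w a)].
Proof.
move=> s U0; have [V [V0 VU]] := nbhs0_sub_split U0.
have [F [fF FA HF]] := s V V0; exists F; split => // E fE EAF.
have FE_A : F `|` E `<=` A by move=> x [/FA|/EAF []].
have fFE : finite_set (F `|` E) by rewrite finite_setU.
have := VU _ _ (HF F fF (@subset_refl _ F) FA) (HF _ fFE (@subsetUl _ F E) FE_A).
rewrite fsbigU0 //; last by move=> x [Fx /EAF []].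
by rewrite opprB addrC addrA subrK addrC addKr.
Qed.

End FamilySums.

Section CauchySummability.
Variable G : topologicalZmodType.

Lemma not_abs_cauchy_block (A U : set G) :
  ~ (exists F, [/\ finite_set F, F `<=` A & gen_subgroup (A `\` F) `<=` U]) ->
  forall F, finite_set F -> F `<=` A -> exists E (n : G -> int),
    [/\ finite_set E, E `<=` A `\` F & ~ U (\sum_(a \in E) a *~ n a)].
Proof.
move=> notC F fF FA.
have /existsNP [x /not_implyP [AFx nUx]] : ~ (gen_subgroup (A `\` F) `<=` U).
  by move=> AFU; apply: notC; exists F.
by have [E [n [fE EA _ x_def]]] := gen_subgroup_int_span AFx; exists E, n; rewrite -x_def.
Qed.

Lemma abs_summable_cauchy (A : set G) : abs_summable A -> abs_cauchy_summable A.
Proof.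
move=> sA U U0; apply: contrapT => /not_abs_cauchy_block block.
have /choice [p pP] : forall F : set G, exists p : set G * (G -> int),
    finite_set F -> F `<=` A ->
    [/\ finite_set p.1, p.1 `<=` A `\` F & ~ U (\sum_(a \in p.1) a *~ p.2 a)].
  move=> F; have [[fF FA]|nF] := pselect (finite_set F /\ F `<=` A).
    by have [E [n En]] := block F fF FA; exists (E, n).
  by exists (set0, fun _ => 0) => fF FA; case: nF.
pose C := accum (fun F => (p F).1); pose E k := (p (C k)).1; pose n k := (p (C k)).2.
have CA : forall k, finite_set (C k) /\ C k `<=` A.
  apply: accum_finite_sub => F fF FA.
  by have [fE EAF _] := pP F fF FA; split => // x /EAF [].
have EP k : [/\ finite_set (E k), E k `<=` A `\` C k & ~ U (\sum_(a \in E k) a *~ n k a)].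
  exact: pP (CA k).1 (CA k).2.
have disj j k x : E j x -> E k x -> j = k.
  apply: (accum_step_disjoint (h := fun F => (p F).1)) => i y Eiy.
  by have [_ /(_ y Eiy) []] := EP i.
have [z zE] := glue_on_disjoint 0 n disj.
have [g sg] := sA z.
have [F [fF FA FU]] := has_fsum_cauchy sg U0.
have [k EkF] := finite_meets_finitely fF disj.
have [fEk EkA nU] := EP k; apply: nU.
have EkAF : E k `<=` A `\` F by move=> x Ekx; split; [case: (EkA x Ekx) | exact: EkF].
rewrite (eq_fsbigr (fun a => a *~ z a)); first exact: FU.
by move=> a /set_mem Eka; rewrite (zE k).
Qed.

Definition partial_sums (A : set G) (w : G -> G) : set_system G :=
  filter_from [set F | finite_set F /\ F `<=` A] (fun F =>
    [set \sum_(a \in E) w a | E in [set E | [/\ finite_set E, F `<=` E & E `<=` A]]]).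

Lemma partial_sums_proper (A : set G) w : ProperFilter (partial_sums A w).
Proof.
have FF : Filter (partial_sums A w).
  apply: filter_from_filter; first by exists set0; split.
  move=> F1 F2 [f1 A1] [f2 A2]; exists (F1 `|` F2).
    by split; [rewrite finite_setU | move=> x [/A1|/A2]].
  move=> _ [E [fE FE EA] <-]; split; exists E => //; split => //.
    by apply: subset_trans FE; exact: subsetUl.
  by apply: subset_trans FE; exact: subsetUr.
by apply: (filter_from_proper FF) => F [fF FA]; exists (\sum_(a \in F) w a), F; split.
Qed.

Lemma partial_sums_cvg (A : set G) w g : partial_sums A w --> g -> has_fsum A w g.
Proof.
move=> Sg U U0; have [F [fF FA] FU] := Sg _ (nbhs_subl g U0).
by exists F; split => // E fE FE EA; apply: FU; exists E.
Qed.

Lemma partial_sums_cauchy (A : set G) w : abs_cauchy_summable A ->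
  (forall a, A a -> cyclic_sub a (w a)) -> group_cauchy (partial_sums A w).
Proof.
move=> cA Aw U U0; have [F [fF FA FU]] := cA U U0.
exists [set \sum_(a \in E) w a | E in [set E | [/\ finite_set E, F `<=` E & E `<=` A]]].
split; first by exists F.
move=> _ _ [E [fE FE EA] <-] [E' [fE' FE' EA'] <-]; apply: FU.
set sF := \sum_(a \in F) w a.
have -> : \sum_(a \in E) w a - \sum_(a \in E') w a =
    (\sum_(a \in E) w a - sF) - (\sum_(a \in E') w a - sF) by rewrite opprB addrA subrK.
by apply: (subgroupB (gen_subgroup_subgroup _)); exact: fsum_sub_gen_subgroup.
Qed.

Lemma abs_cauchy_summable_summable (A : set G) :
  group_complete G -> abs_cauchy_summable A -> abs_summable A.
Proof.
move=> cG cA z; pose w a := a *~ z a.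
have Aw : forall a, A a -> cyclic_sub a (w a) by move=> a _; exists (z a).
have [g Sg] := cG _ (partial_sums_proper A w) (partial_sums_cauchy cA Aw).
by exists g; exact: partial_sums_cvg.
Qed.

End CauchySummability.

Section PointwiseTopology.
Variables (T : eqType) (U : topologicalType).

Lemma ptws_nbhs_cylinder (f : {ptws T -> U}) (N : set {ptws T -> U}) :
  nbhs f N -> exists S : set T, finite_set S /\
    forall g : {ptws T -> U}, (forall x, S x -> g x = f x) -> N g.
Proof.
pose C := filter_from (@finite_set T)
  (fun S => [set g : {ptws T -> U} | forall x, S x -> g x = f x]).
have FC : Filter C.
  apply: filter_from_filter; first by exists set0.
  move=> S1 S2 f1 f2; exists (S1 `|` S2); first by rewrite finite_setU.
  by move=> g Sg; split => x Sx; apply: Sg; [left|right].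
suff /(_ N) Cf : C --> f by move=> /Cf [S fS SN]; exists S; split => // g /SN.
apply/cvg_sup => i; apply/(@cvg_image _ _ (fun g : T -> U => g i)).
  by apply/seteqP; split => // y _; exists (fun _ => y).
move=> P Pfi; exists ((fun g : T -> U => g i) @^-1` P).
  exists [set i]; first exact: finite_set1.
  by move=> g /= ->; [exact: nbhs_singleton | reflexivity].
by apply: image_preimage; apply/seteqP; split => // y _; exists (fun _ => y).
Qed.

Lemma ptws_nbhs_eval (f : {ptws T -> U}) (b : T) (O : set U) :
  nbhs (f b) O -> nbhs f [set g : {ptws T -> U} | O (g b)].
Proof. by move=> Ob; apply: (@proj_continuous T (fun _ => U) b f). Qed.

End PointwiseTopology.

Section ProductSubgroup.
Variables (G : topologicalZmodType) (B : set G).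

Definition restrict (p : pred G) (f : {ptws G -> G}) : {ptws G -> G} :=
  fun x => if p x then f x else 0.

Lemma PB0 : PB B (fun _ => 0).
Proof. by split => // b _; exists 0 => //; rewrite mulr0z. Qed.

Lemma PBD (f g : {ptws G -> G}) : PB B f -> PB B g -> PB B (f \+ g).
Proof.
move=> [fB f0] [gB g0]; split => [b Bb|x nBx] /=.
  by apply: (subgroupD (cyclic_sub_subgroup b)); [apply: fB | apply: gB].
by rewrite f0 // g0 // addr0.
Qed.

Lemma PBMz (f : {ptws G -> G}) m : PB B f -> PB B (fun x => f x *~ m).
Proof.
move=> [fB f0]; split => [b Bb|x nBx] /=.
  by apply: (subgroupMz (cyclic_sub_subgroup b)); apply: fB.
by rewrite f0 // mul0rz.
Qed.

Lemma PBN (f : {ptws G -> G}) : PB B f -> PB B (fun x => - f x).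
Proof. by move=> /(PBMz (-1)); under eq_fun do rewrite mulrN1z. Qed.

Lemma PB_sub (f g : {ptws G -> G}) : PB B f -> PB B g -> PB B (fun x => g x - f x).
Proof. by move=> Pf Pg; apply: PBD => //; exact: PBN. Qed.

Lemma PB_restrict p (f : {ptws G -> G}) : PB B f -> PB B (restrict p f).
Proof.
move=> [fB f0]; split => [b Bb|x nBx]; rewrite /restrict.
  by case: (p b); [apply: fB | exact: subgroup0 (cyclic_sub_subgroup b)].
by case: (p x); rewrite ?f0.
Qed.

Section Additive.
Variable phi : {ptws G -> G} -> G.
Hypothesis hom : forall f g, PB B f -> PB B g -> phi (f \+ g) = phi f + phi g.

Lemma hom_PB0 : phi (fun _ => 0) = 0.
Proof.
apply: (@addrI _ (phi (fun _ => 0))); rewrite addr0 -hom; [|exact: PB0..].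
by congr phi; apply/funext => x /=; rewrite addr0.
Qed.

Lemma hom_PBN f : PB B f -> phi (fun x => - f x) = - phi f.
Proof.
move=> Pf; apply: (@addrI _ (phi f)); rewrite subrr -hom_PB0 -hom //; last exact: PBN.
by congr phi; apply/funext => x /=; rewrite subrr.
Qed.

Lemma hom_PBMz f m : PB B f -> phi (fun x => f x *~ m) = phi f *~ m.
Proof.
move=> Pf; have Mn k : phi (fun x => f x *+ k) = phi f *+ k.
  elim: k => [|k IH]; first by under eq_fun do rewrite mulr0n; rewrite hom_PB0.
  rewrite mulrS -IH -hom //; last exact: (PBMz k).
  by congr phi; apply/funext => x /=; rewrite mulrS.
case: m => k; first exact: Mn.
rewrite NegzE mulrNz -[phi f *~ _]/(phi f *+ k.+1) -Mn -hom_PBN; last exact: (PBMz k.+1).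
by congr phi; apply/funext => x; rewrite mulrNz.
Qed.

Lemma hom_PB_restrict_fsum f (D : set G) : PB B f -> finite_set D ->
  phi (restrict (fun x => x \in D) f) = \sum_(b \in D) phi (restrict (pred1 b) f).
Proof.
move=> Pf fD.
have seqE s : uniq s ->
    phi (restrict (fun x => x \in s) f) = \sum_(b <- s) phi (restrict (pred1 b) f).
  elim: s => [_|b s IH /= /andP [bs us]]; first by rewrite big_nil -hom_PB0.
  rewrite big_cons -IH // -hom; [|exact: PB_restrict..].
  congr phi; apply/funext => x.
  rewrite /restrict /= in_cons; case: (eqVneq x b) => [->|] /=.
    by rewrite (negbTE bs) addr0.
  by rewrite add0r.
rewrite fsbig_finite // -seqE ?finmap.fset_uniq //; congr phi; apply/funext => x.
by rewrite /restrict in_fset_set.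
Qed.

End Additive.
End ProductSubgroup.

Section IsoSummable.
Variables (G : topologicalZmodType) (B : set G) (phi : {ptws G -> G} -> G).

Definition delta (b : G) : {ptws G -> G} := fun x => if x == b then b else 0.

Lemma PB_delta b : B b -> PB B (delta b).
Proof.
move=> Bb; split => [c Bc|x nBx]; rewrite /delta.
  case: eqVneq => [->|_]; first by exists 1; rewrite ?mulr1z.
  exact: subgroup0 (cyclic_sub_subgroup c).
by case: eqVneq => // xb; case: nBx; rewrite xb.
Qed.

Lemma delta_inj_on : (forall f g, PB B f -> PB B g -> phi f = phi g -> f = g) ->
  {in B `\ 0 &, injective (phi \o delta)}.
Proof.
move=> inj b1 b2 /set_mem [Bb1 b1_0] /set_mem [Bb2 _].
move=> /(inj _ _ (PB_delta Bb1) (PB_delta Bb2)) /(congr1 (fun h : {ptws G -> G} => h b1)).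
rewrite /delta /= eqxx; case: eqVneq => // _ b1_eq0; case: b1_0; exact/eqP.
Qed.

Lemma restrict_nearby f (U : set G) : {within PB B, continuous phi} ->
  PB B f -> nbhs (phi f) U -> exists S, finite_set S /\
    forall p : pred G, (forall x, S x -> ~~ p x -> f x = 0) -> U (phi (restrict p f)).
Proof.
move=> /subspace_continuousP cont Pf Uf.
have := cont f Pf _ Uf; rewrite /= nbhs_simpl /within /= => Nf.
have [S [fS SN]] := ptws_nbhs_cylinder Nf.
exists S; split => // p pS; apply: SN; last exact: PB_restrict.
by move=> x Sx; rewrite /restrict; case: ifPn => // /(pS x Sx) ->.
Qed.

Lemma hom_restrict_delta f (D : set G) (c : G -> int) :
  (forall f g, PB B f -> PB B g -> phi (f \+ g) = phi f + phi g) ->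
  PB B f -> finite_set D -> D `<=` B -> (forall x, D x -> f x = x *~ c x) ->
  phi (restrict (fun x => x \in D) f) = \sum_(b \in D) phi (delta b) *~ c b.
Proof.
move=> hom Pf fD DB fc; rewrite (hom_PB_restrict_fsum hom) //.
apply: eq_fsbigr => b /set_mem Db; rewrite -(hom_PBMz hom); last exact/PB_delta/DB.
congr phi; apply/funext => x; rewrite /restrict /delta /=.
by case: eqVneq => [->|_]; [exact: fc | rewrite mul0rz].
Qed.

Lemma iso_abs_summable : infinite_set B -> top_iso_onto_subgroup B phi ->
  exists A : set G, infinite_set A /\ abs_summable A.
Proof.
move=> iB [hom inj cont _]; pose B0 := B `\ 0; pose io := phi \o delta.
have io_inj : {in B0 &, injective io} := delta_inj_on inj.
exists (io @` B0); split.
  rewrite (eq_finite_set (inj_card_eq io_inj)).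
  by apply: infinite_setD => //; exact: finite_set1.
move=> z; pose f := restrict (fun x => x \in B0) (fun x => x *~ z (io x)).
have Pf : PB B f.
  split => [b Bb|x nBx]; rewrite /f /restrict.
    by case: ifP => _; [exists (z (io b)) | exact: subgroup0 (cyclic_sub_subgroup b)].
  by rewrite ifF //; apply/negP => /set_mem [].
exists (phi f) => U U0.
have [S [fS SU]] := restrict_nearby cont Pf (nbhs_subl (phi f) U0).
exists (io @` (S `&` B0)); split.
- exact/finite_image/finite_setIl.
- by move=> _ [b [_ B0b] <-]; exists b.
move=> E fE SE EA; pose D := B0 `&` io @^-1` E.
have ED : io @` D = E.
  apply/seteqP; split; first by move=> _ [b [_ Eb] <-].
  by move=> a Ea; have [b B0b ba] := EA a Ea; exists b => //; split => //; rewrite /= ba.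
have ioD : {in D &, injective io}.
  by move=> x y /set_mem [B0x _] /set_mem [B0y _]; apply: io_inj; exact/mem_set.
have fD : finite_set D by rewrite -(eq_finite_set (inj_card_eq ioD)) ED.
have -> : \sum_(a \in E) a *~ z a = phi (restrict (fun x => x \in D) f).
  rewrite -ED fsbig_image // (hom_restrict_delta hom (c := z \o io)) //.
    by move=> x [[Bx _] _].
  by move=> x [B0x _]; rewrite /f /restrict ifT //; exact/mem_set.
apply: SU => x Sx /negP nDx; rewrite /f /restrict; case: ifPn => // /set_mem B0x.
by case: nDx; apply/mem_set; split => //; apply: SE; exists x.
Qed.

End IsoSummable.

Section DiscreteCyclic.
Variable G : topologicalZmodType.
Hypothesis dG : cyclic_subgroups_discrete G.

Definition cyclic_avoiding (V : set G) (b : G) :=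
  forall x y w, V x -> V y -> V w -> cyclic_sub b (x - (y + w)) -> x - (y + w) = 0.

Lemma nbhs0_cyclic_avoiding b : exists V, nbhs 0 V /\ cyclic_avoiding V b.
Proof.
have [U [oU Ub]] := dG (subgroup0 (cyclic_sub_subgroup b)).
have U0 : nbhs 0 U.
  apply: open_nbhs_nbhs; split => //.
  by have [] : (U `&` cyclic_sub b) 0 by rewrite Ub.
have [V1 [V10 V1U]] := nbhs0_sub_split U0.
have [V2 [V20 V2V1]] := nbhs0_add_split V10.
exists (V1 `&` V2); split; first exact: filterI.
move=> x y w [Vx _] [_ Vy] [_ Vw] bxyw.
have : (U `&` cyclic_sub b) (x - (y + w)) by split => //; apply: V1U => //; apply: V2V1.
by rewrite Ub.
Qed.

Lemma PB_nbhs_agree (B : set G) (f : {ptws G -> G}) (F : set G) :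
  PB B f -> finite_set F -> nbhs f [set g | PB B g -> forall x, F x -> g x = f x].
Proof.
move=> Pf fF; have /choice [Ob ObP] : forall x, exists O : set G,
    B x -> open O /\ O `&` cyclic_sub x = [set f x].
  move=> x; have [Bx|nBx] := pselect (B x); last by exists set0.
  by have [W Wx] := dG (Pf.1 x Bx); exists W.
have fFB : finite_set (F `&` B) by exact: finite_setIl.
have N := @filter_bigI _ G (fset_set (F `&` B))
  (fun x => [set g : {ptws G -> G} | Ob x (g x)]) _ (nbhs_filter f).
apply: filterS (N _) => [g Og Pg x Fx|x]; last first.
  rewrite in_fset_set // => /set_mem [_ Bx].
  apply: ptws_nbhs_eval; have [oO Of] := ObP x Bx.
  apply: open_nbhs_nbhs; split => //.
  by have [] : (Ob x `&` cyclic_sub x) (f x) by rewrite Of.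
have [Bx|nBx] := pselect (B x); last by rewrite Pf.2 // Pg.2.
have [_ Of] := ObP x Bx.
have : (Ob x `&` cyclic_sub x) (g x).
  by split; [apply: Og; rewrite /= in_fset_set // inE | exact: Pg.1].
by rewrite Of.
Qed.

End DiscreteCyclic.

Section Construction.
Variables (G : topologicalZmodType) (A : set G).
Hypotheses (hG : hausdorff_space G) (dG : cyclic_subgroups_discrete G).
Hypotheses (iA : infinite_set A) (sA : abs_summable A).

Definition good_step (C : set G) (p : G * set G * set G) :=
  [/\ A p.1.1, ~ C p.1.1, nbhs 0 p.1.2, cyclic_avoiding p.1.2 p.1.1 &
      [/\ finite_set p.2, p.2 `<=` A & gen_subgroup (A `\` p.2) `<=` p.1.2]].

Lemma good_step_exists C : exists p, finite_set C -> good_step C p.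
Proof.
have [fC|] := pselect (finite_set C); last by exists (0, set0, set0).
have [b [Ab nCb]] : (A `\` C) !=set0 by apply/infinite_setN0/infinite_setD.
have [V [V0 Vb]] := nbhs0_cyclic_avoiding dG b.
have [F [fF FA FV]] := abs_summable_cauchy sA V0.
by exists (b, V, F).
Qed.

Definition step : set G -> G * set G * set G := projT1 (choice good_step_exists).

Definition chosen : nat -> set G := accum (fun C => [set (step C).1.1] `|` (step C).2).

Definition bn k := (step (chosen k)).1.1.
Definition Vn k := (step (chosen k)).1.2.
Definition Fn k := (step (chosen k)).2.

Lemma stepP C : finite_set C -> good_step C (step C).
Proof. exact: projT2 (choice good_step_exists) C. Qed.

Lemma chosen_finite_sub k : finite_set (chosen k) /\ chosen k `<=` A.
Proof.
apply: accum_finite_sub => C fC _; have [Ab _ _ _ [fF FA _]] := stepP fC.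
by split; [rewrite finite_setU; split => //; exact: finite_set1 | move=> x [->|/FA]].
Qed.

Lemma bnP k : [/\ A (bn k), ~ chosen k (bn k), nbhs 0 (Vn k),
  cyclic_avoiding (Vn k) (bn k) &
  [/\ finite_set (Fn k), Fn k `<=` A & gen_subgroup (A `\` Fn k) `<=` Vn k]].
Proof. exact: stepP (chosen_finite_sub k).1. Qed.

Lemma bn_chosen j k : (j < k)%N -> chosen k (bn j).
Proof. by move=> jk; apply: accum_step jk _ _; left. Qed.

Lemma bn_inj : injective bn.
Proof.
move=> j k e; case: (ltngtP j k) => // jk.
  by have [_ nc _ _ _] := bnP k; case: nc; rewrite -e; exact: bn_chosen.
by have [_ nc _ _ _] := bnP j; case: nc; rewrite e; exact: bn_chosen.
Qed.

Lemma Fn_bn k j : Fn k (bn j) -> (j <= k)%N.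
Proof.
move=> Fkj; rewrite leqNgt; apply/negP => kj.
by have [_ nc _ _ _] := bnP j; apply: nc; apply: accum_step kj _ _; right.
Qed.

Definition Bn := range bn.

Lemma Bn_infinite : infinite_set Bn.
Proof.
rewrite /Bn (eq_finite_set (@inj_card_eq _ _ [set: nat] bn _)); first exact: infinite_nat.
by move=> x y _ _ /bn_inj.
Qed.

Lemma bn_index_ub (S : set G) : finite_set S -> exists M, forall k, S (bn k) -> (k <= M)%N.
Proof.
move=> fS; apply: finite_nat_ub; apply: finite_preimage fS.
by move=> x y _ _ /bn_inj.
Qed.

Lemma nbhs0_Vn_upto M : nbhs 0 (fun d => forall k, (k <= M)%N -> Vn k d).
Proof.
elim: M => [|M IH].
  by have [_ _ V0 _ _] := bnP 0; apply: filterS V0 => d Vd k; rewrite leqn0 => /eqP ->.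
have [_ _ V0 _ _] := bnP M.+1.
apply: filterS (filterI IH V0) => d [VM VM1] k; rewrite leq_eqVlt ltnS.
by case/orP => [/eqP ->|/VM].
Qed.

Definition sumB (f : {ptws G -> G}) : G :=
  if pselect (exists g, has_fsum A f g) is left h then projT1 (cid h) else 0.

Lemma sumB_has_fsum f : PB Bn f -> has_fsum A f (sumB f).
Proof.
move=> [fB f0]; have /choice [z zP] : forall a, exists n : int, f a = a *~ n.
  move=> a; have [[k _ <-]|nBa] := pselect (Bn a); last by exists 0; rewrite f0 // mulr0z.
  by have [n _ <-] := fB _ (ex_intro2 _ _ k I erefl); exists n.
have [g sg] := sA z.
have sf : has_fsum A f g by apply: eq_has_fsum sg => a _; rewrite zP.
by rewrite /sumB; case: pselect => [h|]; [case: cid | case; exists g].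
Qed.

Lemma sumB_eq f g : PB Bn f -> has_fsum A f g -> sumB f = g.
Proof. by move=> Pf; exact: has_fsum_unique hG (sumB_has_fsum Pf). Qed.

Lemma sumB_hom f g : PB Bn f -> PB Bn g -> sumB (f \+ g) = sumB f + sumB g.
Proof.
move=> Pf Pg; apply: sumB_eq; first exact: PBD.
exact: has_fsumD (sumB_has_fsum Pf) (sumB_has_fsum Pg).
Qed.

Lemma sumB_sub f g : PB Bn f -> PB Bn g -> sumB (fun x => g x - f x) = sumB g - sumB f.
Proof.
move=> Pf Pg; rewrite -(hom_PBN sumB_hom Pf) -sumB_hom //; exact: PBN.
Qed.

Lemma sumB_single f k : PB Bn f -> sumB (restrict (pred1 (bn k)) f) = f (bn k).
Proof.
move=> Pf; apply: sumB_eq; first exact: PB_restrict.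
move=> U U0; exists [set bn k]; split; [exact: finite_set1 | by move=> x ->; case: (bnP k) |].
move=> E fE kE EA; rewrite -(fsbig_widen [set bn k]) //; last first.
  by move=> x [_ /= nx]; rewrite /restrict ifF //; apply/negP => /eqP.
by rewrite fsbig_set1 /restrict /= eqxx subrr; exact: nbhs_singleton.
Qed.

Lemma sumB_tail f (F V : set G) : PB Bn f -> nbhs 0 V ->
  gen_subgroup (A `\` F) `<=` V -> (forall a, F a -> f a = 0) ->
  exists v1 v2, [/\ V v1, V v2 & sumB f = v1 + v2].
Proof.
move=> Pf V0 FV fF; have [F0 [fF0 F0A F0V]] := sumB_has_fsum Pf V0.
exists (sumB f - \sum_(a \in F0) f a), (\sum_(a \in F0) f a); rewrite subrK; split => //.
  exact: F0V.
apply: FV; apply: (subgroup_fsum (gen_subgroup_subgroup _)) => // a F0a.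
have gen0 := subgroup0 (gen_subgroup_subgroup (A `\` F)).
have [Fa|nFa] := pselect (F a); first by rewrite fF.
have [Ba|nBa] := pselect (Bn a); last by rewrite Pf.2.
by apply: (@cyclic_sub_gen_subgroup _ _ a); [split => //; exact: F0A | exact: Pf.1].
Qed.

Lemma sumB_coord_vanish h k : PB Bn h -> (forall j, (j < k)%N -> h (bn j) = 0) ->
  Vn k (sumB h) -> h (bn k) = 0.
Proof.
move=> Ph hj Vh; pose h' := restrict (predC1 (bn k)) h.
have Ph' : PB Bn h' by exact: PB_restrict.
have hE : h = restrict (pred1 (bn k)) h \+ h'.
  by apply/funext => x; rewrite /h' /restrict /=; case: (x == bn k); rewrite ?addr0 ?add0r.
have [_ _ V0 Vk [_ _ FV]] := bnP k.
have h'F a : Fn k a -> h' a = 0.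
  move=> Fa; rewrite /h' /restrict /=; case: ifPn => // nak.
  have [[j _ ja]|nBa] := pselect (Bn a); last by rewrite Ph.2.
  rewrite -ja; apply: hj; rewrite ltn_neqAle Fn_bn ?andbT; last by rewrite ja.
  by apply: contraNneq nak => jk; rewrite -ja jk.
have [v1 [v2 [V1 V2 h'E]]] := sumB_tail Ph' V0 FV h'F.
have hk : h (bn k) = sumB h - (v1 + v2).
  rewrite {2}hE sumB_hom; [|exact: PB_restrict|by []].
  by rewrite (sumB_single k Ph) h'E addrK.
rewrite hk; apply: Vk => //; rewrite -hk.
by case: Ph => + _; apply; exists k.
Qed.

Lemma sumB_vanish_upto h M : PB Bn h -> (forall k, (k <= M)%N -> Vn k (sumB h)) ->
  forall k, (k <= M)%N -> h (bn k) = 0.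
Proof.
move=> Ph hV; elim/ltn_ind => k IH kM.
apply: sumB_coord_vanish => // [j jk|]; last exact: hV.
by apply: IH => //; apply: leq_trans kM; exact: ltnW.
Qed.

Lemma sumB_inj f g : PB Bn f -> PB Bn g -> sumB f = sumB g -> f = g.
Proof.
move=> Pf Pg e; apply/funext => x.
have [[k _ <-]|nBx] := pselect (Bn x); last by rewrite Pf.2 // Pg.2.
apply/eqP; rewrite eq_sym -subr_eq0; apply/eqP.
apply: (sumB_vanish_upto (PB_sub Pf Pg) _ (leqnn k)) => j _.
by rewrite sumB_sub // e subrr; case: (bnP j) => _ _ V0 _ _; exact: nbhs_singleton.
Qed.

Lemma sumB_cont : {within PB Bn, continuous sumB}.
Proof.
apply/subspace_continuousP => f Pf P Pf_nbhs; rewrite nbhs_simpl /within /=.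
have [W [W0 WP]] := nbhs0_add_split (nbhs0_addl Pf_nbhs).
have [F [fF FA FW]] := abs_summable_cauchy sA W0.
apply: filterS (PB_nbhs_agree dG Pf fF) => g fg Pg.
have gfF a : F a -> g a - f a = 0 by move=> Fa; rewrite fg // subrr.
have [v1 [v2 [W1 W2 e]]] := sumB_tail (PB_sub Pf Pg) W0 FW gfF.
rewrite /preimage /from_subspace /=.
have -> : sumB g = sumB f + (v1 + v2) by rewrite -e sumB_sub // addrC subrK.
exact: WP.
Qed.

Definition sumB_inv (y : G) : {ptws G -> G} :=
  if pselect (exists f, PB Bn f /\ sumB f = y) is left h then projT1 (cid h)
  else (fun _ => 0).

Lemma sumB_invK f : PB Bn f -> sumB_inv (sumB f) = f.
Proof.
move=> Pf; rewrite /sumB_inv; case: pselect => [h|]; last by case; exists f.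
by case: cid => g [Pg e]; exact: sumB_inj.
Qed.

Lemma sumB_inv_cont : {within sumB @` PB Bn, continuous sumB_inv}.
Proof.
apply/subspace_continuousP => _ [f Pf <-] N; rewrite /from_subspace /= sumB_invK // => Nf.
have [S [fS SN]] := ptws_nbhs_cylinder Nf.
have [M SM] := bn_index_ub fS.
rewrite nbhs_simpl /within /=.
apply: filterS (nbhs_subr (sumB f) (nbhs0_Vn_upto M)) => y VM [g Pg gy].
rewrite -gy /= in VM *; rewrite /preimage /= sumB_invK //; apply: SN => x Sx.
have [[k _ xk]|nBx] := pselect (Bn x); last by rewrite Pf.2 // Pg.2.
rewrite -xk; apply/eqP; rewrite -subr_eq0; apply/eqP.
apply: (sumB_vanish_upto (PB_sub Pf Pg)) => [j jM|]; last by apply: SM; rewrite xk.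
by rewrite sumB_sub //; exact: VM.
Qed.

Lemma abs_summable_iso : exists (B : set G) (phi : {ptws G -> G} -> G),
  infinite_set B /\ top_iso_onto_subgroup B phi.
Proof.
exists Bn, sumB; split; first exact: Bn_infinite.
split; [exact: sumB_hom | exact: sumB_inj | exact: sumB_cont |].
by exists sumB_inv; split; [exact: sumB_invK | exact: sumB_inv_cont].
Qed.

End Construction.

Unset Implicit Arguments.

Theorem corollary7p4 (G : topologicalZmodType) :
  hausdorff_space G -> cyclic_subgroups_discrete G ->
  ((exists A : set G, infinite_set A /\ abs_summable A) <->
   (exists (B : set G) (phi : {ptws G -> G} -> G),
      infinite_set B /\ top_iso_onto_subgroup B phi)) /\
  (group_complete G ->
   ((exists A : set G, infinite_set A /\ abs_summable A) <->
    (exists A : set G, infinite_set A /\ abs_cauchy_summable A))).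
Proof.
move=> hG dG; split.
  split=> [[A [iA sA]] | [B [phi [iB iso]]]].
    exact: abs_summable_iso hG dG iA sA.
  exact: iso_abs_summable iB iso.
move=> cG; split=> [[A [iA sA]] | [A [iA cA]]]; exists A; split => //.
  exact: abs_summable_cauchy.
exact: abs_cauchy_summable_summable.
Qed.
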